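(* Let $n\ge1$ and $G=\mathbf{Z}\times\mathbf{Z}/n\mathbf{Z}$. Let $m$ be a divisor of $n$ and let $(H_k)_{k>0}$ be a sequence of infinite subgroups of $G$ of rank 2. Then $(H_k)_{k>0}$ converges in $\mathcal{C}(G)$ to $\{0\}\times\langle m\rangle$ if and only if, for all $k$ large enough, there exists $g_k\in G$ such that $H_k$ is generated by $(0,m)$ and $g_k$, with $g_k\to\infty$ in $G$ (i.e. $(g_k)$ eventually leaves every finite subset of $G$).
   Context: $\mathcal{C}(G)$ is the set of subgroups of the discrete group $G$ with the Chabauty topology (for discrete $G$, this is the topology induced by the product topology on $\{0,1\}^G$). The rank of a finitely generated group is its minimal number of generators. $\langle m\rangle$ denotes the subgroup of $\mathbf{Z}/n\mathbf{Z}$ generated by the class of $m$. *)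

From mathcomp Require Import all_boot all_algebra.
Set Implicit Arguments. Unset Strict Implicit. Unset Printing Implicit Defensive.
Import GRing.Theory.
Local Open Scope ring_scope.

(* Z/nZ for n >= 1 : the ordinal type 'I_n, written 'I_(n.-1).+1 so that it
   carries MathComp's canonical Z/nZ additive structure (Zp). *)
Definition Zmod (n : nat) : finZmodType := 'I_(n.-1).+1.

Definition G (n : nat) : zmodType := (int * Zmod n)%type.

Definition cls (n : nat) (m : nat) : Zmod n := inZp m.

Definition is_subgroup (T : zmodType) (H : T -> Prop) : Prop :=
  H 0 /\ forall x y, H x -> H y -> H (x - y).

Definition gen (T : zmodType) (s : seq T) : T -> Prop :=
  fun x => exists c : seq int, size c = size s /\
    x = \sum_(i < size s) (nth 0 s i) *~ (nth 0 c i).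

Definition seteq (T : Type) (A B : T -> Prop) : Prop := forall x, A x <-> B x.

Definition has_rank (T : zmodType) (H : T -> Prop) (r : nat) : Prop :=
  (exists s : seq T, size s = r /\ seteq H (gen s)) /\
  (forall s : seq T, (size s < r)%N -> ~ seteq H (gen s)).

Definition infinite_set (T : eqType) (H : T -> Prop) : Prop :=
  forall s : seq T, exists x, H x /\ x \notin s.

(* Convergence in the Chabauty topology of a discrete group (= product topology
   on {0,1}^G): for every g, eventually (g \in H_k <-> g \in H). *)
Definition chabauty_cvg (T : Type) (Hs : nat -> T -> Prop) (H : T -> Prop) : Prop :=
  forall g : T, exists K : nat, forall k, (K <= k)%N -> (Hs k g <-> H g).

Definition tends_to_infty (T : eqType) (g : nat -> T) : Prop :=
  forall F : seq T, exists K : nat, forall k, (K <= k)%N -> g k \notin F.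

From mathcomp Require Import all_boot all_algebra.
From Stdlib Require Import ClassicalEpsilon.
(* A subgroup of Z x Z/nZ generated by u and v is also generated by its
   vertical part H :&: ({0} x Z/nZ) together with the Bezout combination g of
   u and v whose first coordinate is gcd(u.1, v.1). Chabauty convergence is
   pointwise, so on the finite vertical slice it eventually forces
   H_k :&: ({0} x Z/nZ) = {0} x <m>, whence H_k = <(0, m), g_k>; and g_k
   leaves every finite set, since otherwise g_k.1 = 0 and H_k would be finite.
   Conversely a point x of <(0, m), g> outside {0} x <m> has |g.1| <= |x.1|,
   so x drops out of H_k as soon as g_k leaves the box |y.1| <= |x.1|. *)

Set Implicit Arguments.
Unset Strict Implicit.
Unset Printing Implicit Defensive.

Import GRing.Theory.
Local Open Scope ring_scope.

Section GeneratedSubgroups.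
Variable T : zmodType.

Lemma gen1P (a x : T) : gen [:: a] x <-> exists i : int, x = a *~ i.
Proof.
split => [[c [_ ->]] | [i ->]]; first by exists (nth 0 c 0); rewrite big_ord1.
by exists [:: i]; rewrite big_ord1.
Qed.

Lemma gen2P (a b x : T) :
  gen [:: a; b] x <-> exists i j : int, x = a *~ i + b *~ j.
Proof.
split => [[c [_ ->]] | [i [j ->]]].
  by exists (nth 0 c 0), (nth 0 c 1); rewrite big_ord_recr big_ord1.
by exists [:: i; j]; rewrite big_ord_recr big_ord1.
Qed.

Lemma gen2_r (a b : T) : gen [:: a; b] b.
Proof. by apply/gen2P; exists 0, 1; rewrite mulr0z add0r. Qed.

Lemma gen2_subgroup (a b : T) : is_subgroup (gen [:: a; b]).
Proof.
split; first by apply/gen2P; exists 0, 0; rewrite !mulr0z addr0.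
move=> _ _ /gen2P [i [j ->]] /gen2P [i' [j' ->]]; apply/gen2P.
by exists (i - i'), (j - j'); rewrite !mulrzBr opprD addrACA.
Qed.

Variable H : T -> Prop.
Hypothesis subH : is_subgroup H.

Lemma subgroupN x : H x -> H (- x).
Proof. by move=> Hx; rewrite -sub0r; apply: subH.2 => //; exact: subH.1. Qed.

Lemma subgroupD x y : H x -> H y -> H (x + y).
Proof. by move=> Hx Hy; rewrite -[y]opprK; apply: subH.2 => //; exact: subgroupN. Qed.

Lemma subgroupMz x (i : int) : H x -> H (x *~ i).
Proof.
move=> Hx; have Hn (k : nat) : H (x *+ k).
  elim: k => [|k IHk]; first by rewrite mulr0n; exact: subH.1.
  by rewrite mulrS; apply: subgroupD.
case: i => k; first exact: Hn.
by rewrite NegzE mulrNz; apply/subgroupN/Hn.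
Qed.

Lemma gen2_sub a b : H a -> H b -> forall x, gen [:: a; b] x -> H x.
Proof.
by move=> Ha Hb _ /gen2P [i [j ->]]; apply: subgroupD; apply: subgroupMz.
Qed.

End GeneratedSubgroups.

Section VerticalSubgroups.
Variable A : zmodType.
Implicit Types (u v g x : int * A) (c : A).

Lemma fst_mulrz x (z : int) : (x *~ z).1 = x.1 * z.
Proof. by rewrite -mulrzz; apply: (raddfMz (@fst _ _)). Qed.

Lemma fst_gen2 c g x (i j : int) : x = (0, c) *~ i + g *~ j -> x.1 = g.1 * j.
Proof. by move->; rewrite /= !fst_mulrz mul0r add0r. Qed.

Lemma gen2_fst_eq0 c g x : g.1 = 0 -> gen [:: (0, c); g] x -> x.1 = 0.
Proof. by move=> g1 /gen2P [i [j /fst_gen2 ->]]; rewrite g1 mul0r. Qed.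

Lemma leq_abs_fst_gen2 c g x :
  gen [:: (0, c); g] x -> ~ gen [:: (0, c)] x -> (`|g.1| <= `|x.1|)%N.
Proof.
move=> /gen2P [i [j Ex]] notLx; have [j0 | j_neq0] := eqVneq j 0.
  by case: notLx; apply/gen1P; exists i; rewrite Ex j0 mulr0z addr0.
by rewrite (fst_gen2 Ex) abszM leq_pmulr // absz_gt0.
Qed.

Definition gcd_comb u v : int * A :=
  u *~ (egcdz u.1 v.1).1 + v *~ (egcdz u.1 v.1).2.

Lemma gcd_comb_fst u v : (gcd_comb u v).1 = gcdz u.1 v.1.
Proof.
rewrite /gcd_comb /= !fst_mulrz; case: egcdzP => a b /= Hab _.
by rewrite mulrC (mulrC v.1).
Qed.

Lemma gen2_gcd_comb (H : int * A -> Prop) u v c :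
    seteq H (gen [:: u; v]) ->
    (forall a, H (0, a) -> gen [:: (0, c) : int * A] (0, a)) -> H (0, c) ->
  seteq H (gen [:: (0, c); gcd_comb u v]).
Proof.
move=> defH vertH Hc.
have subH : is_subgroup H.
  have [gen0 genB] := gen2_subgroup u v.
  by split=> [|x y /defH Hx /defH Hy]; apply/defH; [exact: gen0 | exact: genB].
have Hg : H (gcd_comb u v) by apply/defH/gen2P; do 2!eexists.
move=> w; split=> [Hw | ]; last exact: gen2_sub.
have dvd_w1 : (gcdz u.1 v.1 %| w.1)%Z.
  move/defH/gen2P: Hw => [i [j ->]]; rewrite /= !fst_mulrz.
  by rewrite rpredD ?dvdz_mulr ?dvdz_gcdl ?dvdz_gcdr.
pose q := (w.1 %/ gcdz u.1 v.1)%Z; pose r := w - gcd_comb u v *~ q.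
have r1 : r.1 = 0 by rewrite /= fst_mulrz gcd_comb_fst mulrC divzK // subrr.
have defr : r = (0, r.2) by rewrite [LHS]surjective_pairing r1.
have Hr : H (0, r.2) by rewrite -defr; apply: subH.2 => //; apply: subgroupMz.
have /gen1P [t Et] := vertH _ Hr.
by apply/gen2P; exists t, q; rewrite -Et -defr subrK.
Qed.

End VerticalSubgroups.

Section Boxes.
Variable A : finType.

Definition int_range (N : nat) : seq int :=
  [seq i%:Z | i <- iota 0 N.+1] ++ [seq - i%:Z | i <- iota 0 N.+1].

Lemma mem_int_range N (z : int) : (`|z| <= N)%N -> z \in int_range N.
Proof.
rewrite mem_cat; case: z => k hk; apply/orP.
  by left; apply: map_f; rewrite mem_iota.
by right; rewrite NegzE; apply: (map_f (fun i : nat => - i%:Z)); rewrite mem_iota.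
Qed.

Definition box (N : nat) : seq (int * A) :=
  [seq (z, a) | z <- int_range N, a <- enum A].

Lemma mem_box N (x : int * A) : (`|x.1| <= N)%N -> x \in box N.
Proof.
case: x => z a /= hz.
by apply: (allpairs_f (fun z a => (z, a))); rewrite ?mem_int_range ?mem_enum.
Qed.

End Boxes.

Lemma chabauty_cvg_seq (T : eqType) (Hs : nat -> T -> Prop) (H : T -> Prop) :
    chabauty_cvg Hs H ->
  forall s : seq T, exists K, forall k, (K <= k)%N -> forall x, x \in s -> Hs k x <-> H x.
Proof.
move=> cvgH; elim=> [|y s [Ks HKs]]; first by exists 0%N.
have [Ky HKy] := cvgH y.
exists (maxn Ky Ks) => k; rewrite geq_max => /andP [kKy kKs] x.
by rewrite in_cons => /orP [/eqP -> | xs]; [exact: HKy | exact: HKs].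
Qed.

Section ChabautyLimit.
Variables (A : finZmodType) (c : A) (Hs : nat -> int * A -> Prop).
Variables (K : nat) (g : nat -> int * A).
Hypothesis defHs : forall k, (K <= k)%N -> seteq (Hs k) (gen [:: (0, c); g k]).

Lemma chabauty_cvg_gen2 : tends_to_infty g -> chabauty_cvg Hs (gen [:: (0, c)]).
Proof.
move=> g_infty x; have [Lx | notLx] := classic (gen [:: (0, c)] x).
  exists K => k kK; split=> // _; apply/defHs => //.
  by move/gen1P: Lx => [i ->]; apply/gen2P; exists i, 0; rewrite mulr0z addr0.
have [Kx HKx] := g_infty (box A `|x.1|).
exists (maxn K Kx) => k; rewrite geq_max => /andP [kK kKx]; split=> // /(defHs kK) Hx.
by have := HKx k kKx; rewrite mem_box // (leq_abs_fst_gen2 Hx notLx).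
Qed.

Lemma tends_to_infty_gen2 :
    chabauty_cvg Hs (gen [:: (0, c)]) -> (forall k, (K <= k)%N -> infinite_set (Hs k)) ->
  tends_to_infty g.
Proof.
move=> cvgH infHs F; have [KF HKF] := chabauty_cvg_seq cvgH F.
exists (maxn K KF) => k; rewrite geq_max => /andP [kK kKF]; apply/negP => gF.
have /gen1P [i gi] : gen [:: (0, c)] (g k).
  by apply/(HKF k kKF _ gF)/(defHs kK); exact: gen2_r.
have g1 : (g k).1 = 0 by rewrite gi fst_mulrz mul0r.
have [x [/(defHs kK) Hx]] := infHs k kK (box A 0).
by rewrite mem_box // (gen2_fst_eq0 g1 Hx).
Qed.

End ChabautyLimit.

Theorem proposition3 (n m : nat) (hn : (1 <= n)%N) (hm : (m %| n)%N)
    (Hs : nat -> G n -> Prop)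
    (hsub : forall k, (0 < k)%N -> is_subgroup (Hs k))
    (hinf : forall k, (0 < k)%N -> infinite_set (Hs k))
    (hrank : forall k, (0 < k)%N -> has_rank (Hs k) 2) :
  chabauty_cvg Hs (gen [:: ((0 : int), cls n m) : G n]) <->
  exists K : nat, exists g : nat -> G n,
    (forall k, (K <= k)%N -> seteq (Hs k) (gen [:: ((0 : int), cls n m) : G n; g k])) /\
    tends_to_infty g.
Proof.
(* hsub follows from hrank. *)
split=> [cvgH | [K [g [defHs g_infty]]]]; last exact: chabauty_cvg_gen2 defHs g_infty.
have [K0 vertHs] := chabauty_cvg_seq cvgH (box (Zmod n) 0).
have [uv defuv] : exists uv : nat -> G n * G n,
    forall k, (0 < k)%N -> seteq (Hs k) (gen [:: (uv k).1; (uv k).2]).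
  apply: (choice (fun k uv => (0 < k)%N -> seteq (Hs k) (gen [:: uv.1; uv.2]))).
  case=> [|k]; first by exists (0, 0).
  have [[s [size_s defH]] _] := hrank k.+1 isT.
  by case: s size_s defH => [|u [|v []]] // _ defH; exists (u, v).
pose g k := gcd_comb (uv k).1 (uv k).2.
have defHs k : (maxn K0 1 <= k)%N ->
    seteq (Hs k) (gen [:: ((0 : int), cls n m) : G n; g k]).
  rewrite geq_max => /andP [kK0 k_gt0]; apply: gen2_gcd_comb; first exact: defuv.
    by move=> a; apply: (vertHs k kK0 (0, a) _).1; rewrite mem_box.
  apply: (vertHs k kK0 _ _).2; first by rewrite mem_box.
  by apply/gen1P; exists 1; rewrite mulr1z.
exists (maxn K0 1), g; split=> //; apply: tends_to_infty_gen2 defHs cvgH _.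
by move=> k; rewrite geq_max => /andP [_]; exact: hinf.
Qed.
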